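(* Let $R$ be a commutative ring, $M$ an $R$-module, $\underline{x}=x_1,\ldots,x_r$ an $M$-weakly pro-regular sequence and $\mathfrak{a}=\underline{x}R$. Then for every injective $R$-module $I$ the natural map $\Gamma_{\mathfrak{a}}(\operatorname{Hom}_R(M,I))\to\check{C}_{\underline{x}}\otimes_R\operatorname{Hom}_R(M,I)$ is a quasi-isomorphism.
   Context: $\Gamma_{\mathfrak{a}}(N)=\{n\in N:\mathfrak{a}^kn=0\text{ for some }k\}$, regarded as a complex in degree $0$. $\check{C}_{\underline{x}}=\bigotimes_j(0\to R\to R_{x_j}\to0)$ is the Čech complex (degrees $0,\ldots,r$). $\underline{x}$ is $M$-weakly pro-regular if for all $i>0$ the inverse system $\{H_i(\underline{x}^{(n)};M)\}_{n\ge1}$ of Koszul homology modules of $\underline{x}^{(n)}=x_1^n,\ldots,x_r^n$ (with the natural transition maps) is pro-zero, i.e. for every $n$ there is $m\ge n$ such that $H_i(\underline{x}^{(m)};M)\to H_i(\underline{x}^{(n)};M)$ is zero. *)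

From HB Require Import structures.
From mathcomp Require Import all_boot all_order all_algebra.
Set Implicit Arguments. Unset Strict Implicit. Unset Printing Implicit Defensive.
Import Order.TTheory GRing.Theory.
Local Open Scope ring_scope.

Section Defs.
Variable R : comPzRingType.

Definition injective_module (I : lmodType R) : Prop :=
  forall (A B : lmodType R) (f : A -> B) (g : A -> I),
    linear f -> injective f -> linear g ->
    exists h : B -> I, linear h /\ (forall a, h (f a) = g a).

Definition pos r (j : 'I_r) (J : {set 'I_r}) : nat := #|[set l in J | (l < j)%N]|.

(* ---------- Koszul complex K(y; M) ----------
   A chain is z : {set 'I_r} -> M; its degree-i part is (z J)_{#|J| = i},
   the coefficient of e_J.  Differential d(m e_J) = sum_{j in J} (-1)^pos y_j m e_{J\j}. *)
Variable M : lmodType R.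

Definition kos_d r (y : 'I_r -> R) (z : {set 'I_r} -> M) (J : {set 'I_r}) : M :=
  \sum_(j < r | j \notin J) ((-1) ^+ pos j J * y j) *: z (j |: J).

Definition kos_cycle r (y : 'I_r -> R) (i : nat) (z : {set 'I_r} -> M) : Prop :=
  forall J : {set 'I_r}, (#|J|.+1 = i)%N -> kos_d y z J = 0.

Definition kos_boundary r (y : 'I_r -> R) (i : nat) (z : {set 'I_r} -> M) : Prop :=
  exists w : {set 'I_r} -> M, forall J : {set 'I_r}, #|J| = i -> kos_d y w J = z J.

Definition xpow r (x : 'I_r -> R) (n : nat) : 'I_r -> R := fun j => x j ^+ n.

Definition kos_trans r (x : 'I_r -> R) (m n : nat) (z : {set 'I_r} -> M) :
  {set 'I_r} -> M := fun J => (\prod_(j in J) x j ^+ (m - n)) *: z J.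

(* {H_i(x^(n);M)}_{n>=1} is pro-zero for all i > 0 *)
Definition weakly_pro_regular r (x : 'I_r -> R) : Prop :=
  forall i : nat, (0 < i)%N -> forall n : nat, (0 < n)%N ->
  exists2 m : nat, (n <= m)%N &
    forall z : {set 'I_r} -> M, kos_cycle (xpow x m) i z ->
      kos_boundary (xpow x n) i (kos_trans x m n z).

(* ---------- Cech complex tensored with N = Hom_R(M, I) ----------
   (C_x (x) N)^i = (+)_{#|J| = i} N_{x_J}, x_J = prod_{j in J} x_j.
   An element of N_{s} is represented by a pair (f, k) standing for f / s^k,
   with f : M -> I linear. *)
Variable I : lmodType R.

Definition xprod r (x : 'I_r -> R) (J : {set 'I_r}) : R := \prod_(j in J) x j.

Definition loc_eq (s : R) (p q : (M -> I) * nat) : Prop :=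
  exists t : nat, forall u : M,
    s ^+ (t + q.2) *: p.1 u = s ^+ (t + p.2) *: q.1 u.

Definition frac_add (s : R) (p q : (M -> I) * nat) : (M -> I) * nat :=
  (fun u => s ^+ q.2 *: p.1 u + s ^+ p.2 *: q.1 u, (p.2 + q.2)%N).

Definition frac_zero : (M -> I) * nat := (fun _ => 0, 0%N).

Definition cochain r (c : {set 'I_r} -> (M -> I) * nat) : Prop :=
  forall J, linear (c J).1.

(* Cech differential: (dc)_J = sum_{j in J} (-1)^pos(j,J) * image of c_{J\j}
   under the localization map N_{x_{J\j}} -> N_{x_J}; all terms are written
   over the common denominator x_J^K. *)
Definition cech_d r (x : 'I_r -> R) (c : {set 'I_r} -> (M -> I) * nat)
    (J : {set 'I_r}) : (M -> I) * nat :=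
  let K := (\max_(j in J) (c (J :\ j)).2)%N in
  (fun u => \sum_(j in J)
       ((-1) ^+ pos j J * (xprod x (J :\ j) ^+ (K - (c (J :\ j)).2) * x j ^+ K))
         *: (c (J :\ j)).1 u, K).

Definition cech_cocycle r (x : 'I_r -> R) (i : nat) (c : {set 'I_r} -> (M -> I) * nat) : Prop :=
  forall J : {set 'I_r}, #|J| = i.+1 -> loc_eq (xprod x J) (cech_d x c J) frac_zero.

Definition cech_cohomologous r (x : 'I_r -> R) (i : nat)
    (c c' : {set 'I_r} -> (M -> I) * nat) : Prop :=
  exists2 b, cochain b &
    forall J : {set 'I_r}, #|J| = i ->
      loc_eq (xprod x J) (c J) (frac_add (xprod x J) (cech_d x b J) (c' J)).

Definition cech_coboundary r (x : 'I_r -> R) (i : nat) c : Prop :=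
  cech_cohomologous x i c (fun _ => frac_zero).

Definition in_gen_ideal r (x : 'I_r -> R) (a : R) : Prop :=
  exists c : 'I_r -> R, a = \sum_(j < r) c j * x j.

(* a^k f = 0 : every product of k elements of a kills f
   (a^k is additively generated by such products) *)
Definition in_Gamma r (x : 'I_r -> R) (f : M -> I) : Prop :=
  exists k : nat, forall s : seq R, size s = k ->
    (forall a, a \in s -> in_gen_ideal x a) ->
    forall u : M, (\prod_(a <- s) a) *: f u = 0.

(* the natural map Gamma_a(N) -> (C_x (x) N)^0 = N_1 = N, f |-> f/1 *)
Definition gamma_to_cech r (f : M -> I) : {set 'I_r} -> (M -> I) * nat :=
  fun _ => (f, 0%N).

(* the natural map Gamma_a(N) -> C_x (x) N is a quasi-isomorphism
   (Gamma_a(N) sits in degree 0) *)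
Definition gamma_cech_qis r (x : 'I_r -> R) : Prop :=
  (* it is a chain map: images are 0-cocycles *)
  (forall f, linear f -> in_Gamma x f -> cech_cocycle x 0 (gamma_to_cech f)) /\
  (* H^0 : injective *)
  (forall f g, linear f -> linear g -> in_Gamma x f -> in_Gamma x g ->
     cech_cohomologous x 0 (gamma_to_cech f) (gamma_to_cech g) -> f = g) /\
  (* H^0 : surjective *)
  (forall c, cochain c -> cech_cocycle x 0 c ->
     exists f, [/\ linear f, in_Gamma x f & cech_cohomologous x 0 c (gamma_to_cech f)]) /\
  (* H^i = 0 for i > 0 (H^i(Gamma_a(N)) = 0 there) *)
  (forall i : nat, (0 < i)%N -> forall c, cochain c -> cech_cocycle x i c ->
     cech_coboundary x i c).

End Defs.

(* In degree 0 a Cech cochain is a single map f : M -> I, and it is a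
   cocycle exactly when every x_j^k kills f, i.e. when f is a-torsion.
   In degree i > 0, a cocycle c is rewritten over the common denominators
   x_L^m and then read as a linear form psi on the degree-i part of the
   Koszul complex K(x^(m); M); under this reading the Cech differential is
   the transpose of the Koszul differential.  Weak pro-regularity maps each
   Koszul i-cycle for x^(m) to a boundary for x^(n), on which the cocycle
   condition forces psi to vanish; so psi kills
   the kernel of the Koszul differential d, and injectivity of I yields h
   with h o d = psi.  Read back as an (i-1)-cochain with denominators x^m,
   h is a cobounding cochain for c. *)

From HB Require Import structures.
From mathcomp Require Import all_boot all_order all_algebra.
From mathcomp Require Import boolp ring zify.
Set Implicit Arguments. Unset Strict Implicit. Unset Printing Implicit Defensive.
Import Order.TTheory GRing.Theory.
Local Open Scope ring_scope.

Section LinearFun.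
Variables (R : comPzRingType) (V W : lmodType R) (f : V -> W).
Hypothesis lf : linear f.

Lemma linear_fun0 : f 0 = 0.
Proof.
have := lf 1 0 0; rewrite scale1r addr0 scale1r => h.
by apply: (@addrI _ (f 0)); rewrite addr0 -h.
Qed.

Lemma linear_funD u v : f (u + v) = f u + f v.
Proof. by have := lf 1 u v; rewrite !scale1r. Qed.

Lemma linear_funZ a u : f (a *: u) = a *: f u.
Proof. by have := lf a u 0; rewrite !addr0 linear_fun0 addr0. Qed.

Lemma linear_fun_sum (T : Type) (s : seq T) (P : pred T) (F : T -> V) :
  f (\sum_(t <- s | P t) F t) = \sum_(t <- s | P t) f (F t).
Proof. exact: (big_morph f linear_funD linear_fun0). Qed.

End LinearFun.

Section LinearImage.
Variables (R : comPzRingType) (V W : lmodType R) (D : V -> W).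
Hypothesis lD : linear D.

Definition in_image : pred W := fun w => `[< exists v, D v = w >].

Lemma in_image_submod_closed : subsemimod_closed in_image.
Proof.
split; first split.
- by apply/asboolP; exists 0; rewrite linear_fun0.
- move=> _ _ /asboolP[a <-] /asboolP[b <-]; apply/asboolP; exists (a + b).
  exact: linear_funD.
- move=> a _ /asboolP[b <-]; apply/asboolP; exists (a *: b).
  exact: linear_funZ.
Qed.

Definition image_submod of linear D := {w : W | in_image w}.
Local Notation Im := (image_submod lD).
HB.instance Definition _ := [isSub of Im for (@sval W in_image)].
HB.instance Definition _ := [Choice of Im by <:].
HB.instance Definition _ :=
  GRing.SubChoice_isSubLmodule.Build R W in_image Im in_image_submod_closed.

End LinearImage.

(* Factor through the image of [D], then extend to [W] by injectivity of [I]. *)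
Lemma injective_module_factor (R : comPzRingType) (V W I : lmodType R)
    (D : V -> W) (psi : V -> I) :
  injective_module I -> linear D -> linear psi ->
  (forall v, D v = 0 -> psi v = 0) ->
  exists h : W -> I, linear h /\ forall v, h (D v) = psi v.
Proof.
move=> hI lD lpsi hker.
have psi_eq a b : D a = D b -> psi a = psi b.
  move=> eD; apply/eqP; rewrite -subr_eq0 -scaleN1r addrC -linear_funZ //.
  rewrite -linear_funD //; apply/eqP/hker.
  by rewrite linear_funD // linear_funZ // eD scaleN1r addNr.
pose g (w : image_submod lD) : I := psi (sval (cid (asboolP _ (valP w)))).
have gE w v : D v = val w -> g w = psi v.
  by move=> eD; rewrite /g; case: cid => v' /= ev'; apply: psi_eq; rewrite ev'.
have lg : linear g.
  move=> a w1 w2; case/asboolP: (valP w1) => v1 e1; case/asboolP: (valP w2) => v2 e2.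
  rewrite (gE w1 v1) // (gE w2 v2) // (gE _ (a *: v1 + v2)) ?linear_funD ?linear_funZ //.
  by rewrite e1 e2.
have [h [lh hh]] := hI (image_submod lD) W val g (fun _ _ _ => erefl) val_inj lg.
exists h; split=> // v.
have iv : in_image D (D v) by apply/asboolP; exists v.
by rewrite -[D v]/(val (exist _ (D v) iv : image_submod lD)) hh (gE _ v).
Qed.

Section Torsion.
Variables (R : comPzRingType) (M I : lmodType R) (r : nat) (x : 'I_r -> R).

Lemma in_gen_ideal_gen j : in_gen_ideal x (x j).
Proof.
exists (fun l => (l == j)%:R).
by rewrite (bigD1 j) //= eqxx mul1r big1 ?addr0 // => l /negbTE->; rewrite mul0r.
Qed.

(* Expanding the first factor along the generators lowers one exponent of
   [t] by one, whence the induction on [s]. *)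
Lemma prod_gen_ideal_scale_eq0 (s : seq R) (t : 'I_r -> nat) (v : I) :
  (\sum_j t j < size s)%N -> (forall a, a \in s -> in_gen_ideal x a) ->
  (forall j, x j ^+ t j *: v = 0) -> (\prod_(a <- s) a) *: v = 0.
Proof.
elim: s t v => [//|a s IH] t v /= ht hs hv.
have [c ->] := hs a (mem_head _ _).
rewrite big_cons mulr_suml scaler_suml big1 // => j _.
rewrite mulrAC -scalerA -scalerA.
case tj: (t j) => [|k].
  by have := hv j; rewrite tj expr0 scale1r => ->; rewrite !scaler0.
pose t' l := (t l - (l == j))%N.
have sum_t : (\sum_l t l = (\sum_l t' l).+1)%N.
  rewrite (bigD1 j) // [X in _ = X.+1](bigD1 j) //= /t' eqxx tj subn1 /=.
  by congr (_ + _)%N; apply: eq_bigr => l /negbTE->; rewrite subn0.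
rewrite (IH t') ?scaler0 //.
- by rewrite -ltnS -sum_t.
- by move=> b bs; apply: hs; rewrite inE bs orbT.
- move=> l; rewrite /t' scalerA; have [->|ne] := eqVneq l j.
    by rewrite tj subSS subn0 -exprSr -tj hv.
  by rewrite subn0 mulrC -scalerA hv scaler0.
Qed.

Lemma in_Gamma_xpow (f : M -> I) :
  in_Gamma x f -> exists k, forall j u, x j ^+ k *: f u = 0.
Proof.
move=> [k hk]; exists k => j u.
have <- : \prod_(b <- nseq k (x j)) b = x j ^+ k.
  by elim: k {hk} => [|k IH]; rewrite ?big_nil // big_cons IH exprS.
apply: hk; first by rewrite size_nseq.
by move=> a /nseqP[-> _]; exact: in_gen_ideal_gen.
Qed.

Lemma xpow_in_Gamma (f : M -> I) (t : 'I_r -> nat) :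
  (forall j u, x j ^+ t j *: f u = 0) -> in_Gamma x f.
Proof.
move=> ht; exists (\sum_j t j).+1 => s hs hsx u.
by apply: prod_gen_ideal_scale_eq0; rewrite ?hs.
Qed.

End Torsion.

Section Koszul.
Variables (R : comPzRingType) (M : lmodType R) (r : nat).

Lemma pos_set1 (j : 'I_r) : pos j [set j] = 0%N.
Proof.
apply/eqP; rewrite /pos cards_eq0; apply/eqP/setP => l; rewrite !inE.
by case: eqP => // ->; rewrite ltnn.
Qed.

Lemma pos_setD1 (j : 'I_r) (A : {set 'I_r}) : pos j (A :\ j) = pos j A.
Proof.
rewrite /pos (_ : [set l in A :\ j | (l < j)%N] = [set l in A | (l < j)%N]) //.
apply/setP => l; rewrite !inE.
by case: eqP => // ->; rewrite ltnn !andbF.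
Qed.

Lemma xprod_setD1 (x : 'I_r -> R) (j : 'I_r) (J : {set 'I_r}) :
  j \in J -> xprod x J = x j * xprod x (J :\ j).
Proof. exact: big_setD1. Qed.

Lemma sum_setU1_exchange (V : nmodType) (i : nat) (F : 'I_r -> {set 'I_r} -> V) :
  \sum_(J : {set 'I_r} | #|J| == i) \sum_(j | j \notin J) F j J =
  \sum_(L : {set 'I_r} | #|L| == i.+1) \sum_(j in L) F j (L :\ j).
Proof.
rewrite (exchange_big_dep xpredT) // [RHS](exchange_big_dep xpredT) //=.
apply: eq_bigr => j _.
rewrite [RHS](reindex_onto (fun J => j |: J) (fun L => L :\ j)) /=; last first.
  by move=> L /andP[_ jL]; rewrite setD1K.
apply: eq_big => [J|J /andP[_ jJ]]; last by rewrite setU1K.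
rewrite setU11 andbT cardsU1; case: (boolP (j \in J)) => jJ /=.
  rewrite andbF; apply/esym/andP => -[_ /eqP eJ].
  by have := setD11 j (j |: J); rewrite eJ jJ.
by rewrite setU1K // eqxx andbT.
Qed.

Lemma sum_kos_d (W : lmodType R) (y : 'I_r -> R) (i : nat)
    (g : {set 'I_r} -> M -> W) (b : {set 'I_r} -> M) :
  (forall J, linear (g J)) ->
  \sum_(J : {set 'I_r} | #|J| == i) g J (kos_d y b J) =
  \sum_(L : {set 'I_r} | #|L| == i.+1)
     \sum_(j in L) ((-1) ^+ pos j L * y j) *: g (L :\ j) (b L).
Proof.
move=> lg; pose F j J := ((-1) ^+ pos j J * y j) *: g J (b (j |: J)).
transitivity (\sum_(L : {set 'I_r} | #|L| == i.+1) \sum_(j in L) F j (L :\ j)).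
  rewrite -sum_setU1_exchange; apply: eq_bigr => J _.
  by rewrite /kos_d linear_fun_sum //; apply: eq_bigr => j _; rewrite linear_funZ.
by apply: eq_bigr => L _; apply: eq_bigr => j jL; rewrite /F pos_setD1 setD1K.
Qed.

Definition kos_part (i : nat) (z : {ffun {set 'I_r} -> M}) (K : {set 'I_r}) : M :=
  if #|K| == i then z K else 0.

Definition kos_dffun (y : 'I_r -> R) (i : nat) (z : {ffun {set 'I_r} -> M}) :
  {ffun {set 'I_r} -> M} := [ffun L => kos_d y (kos_part i z) L].

Definition kos_elem (J : {set 'I_r}) (u : M) : {ffun {set 'I_r} -> M} :=
  [ffun K => if K == J then u else 0].

Lemma kos_dffun_linear y i : linear (kos_dffun y i).
Proof.
move=> a z1 z2; apply/ffunP => L; rewrite !ffunE /kos_d scaler_sumr -big_split /=.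
apply: eq_bigr => j _; rewrite /kos_part !ffunE; case: ifP => _.
  by rewrite scalerDr !scalerA mulrC.
by rewrite !scaler0 addr0.
Qed.

Lemma kos_elem_linear J : linear (kos_elem J).
Proof.
by move=> a u v; apply/ffunP => K; rewrite !ffunE; case: eqP; rewrite ?scaler0 ?addr0.
Qed.

Lemma kos_dffun_elem (y : 'I_r -> R) (J : {set 'I_r}) (u : M) :
  kos_dffun y #|J| (kos_elem J u) =
  \sum_(j in J) ((-1) ^+ pos j J * y j) *: kos_elem (J :\ j) u.
Proof.
apply/ffunP => L; rewrite !ffunE sum_ffunE /kos_d big_mkcond [RHS]big_mkcond /=.
apply: eq_bigr => j _; rewrite /kos_part !ffunE.
case: (boolP (j \in L)) => jL /=.
  case: ifP => // jJ; case: eqP => [eL|_]; last by rewrite scaler0.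
  by rewrite eL setD11 in jL.
have [<- | neJ] := eqVneq (j |: L) J.
  by rewrite eqxx setU11 setU1K // eqxx -[pos j (j |: L)]pos_setD1 setU1K.
rewrite if_same scaler0; case: ifP => // jJ.
case: eqP => [eL|_]; last by rewrite scaler0.
by rewrite eL setD1K ?eqxx in neJ.
Qed.

End Koszul.

Section CechDegreeZero.
Variables (R : comPzRingType) (M I : lmodType R) (r : nat) (x : 'I_r -> R).

Lemma gamma_to_cech_cocycle (f : M -> I) :
  in_Gamma x f -> cech_cocycle x 0 (gamma_to_cech (r := r) f).
Proof.
move=> /in_Gamma_xpow[k hk] J _; exists k => u /=.
rewrite scaler0 scaler_sumr big1 // => j jJ.
rewrite scalerA (xprod_setD1 _ jJ) addn0 exprMn [x j ^+ k * _]mulrC mulrAC.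
by rewrite -scalerA hk scaler0.
Qed.

Lemma gamma_to_cech_inj (f g : M -> I) :
  cech_cohomologous x 0 (gamma_to_cech (r := r) f) (gamma_to_cech g) -> f = g.
Proof.
move=> [b _ hb]; have [t ht] := hb set0 (cards0 _).
apply: funext => u; have := ht u.
by rewrite /= /xprod big_set0 !expr1n !scale1r big_set0 add0r.
Qed.

Lemma cech_cocycle0_gamma (c : {set 'I_r} -> (M -> I) * nat) :
  cochain c -> cech_cocycle x 0 c ->
  exists f, [/\ linear f, in_Gamma x f & cech_cohomologous x 0 c (gamma_to_cech f)].
Proof.
move=> hc hco; exists (c set0).1; split; first exact: hc.
- have /fin_all_exists[t ht] (j : 'I_r) :
      exists tj : nat, forall u, x j ^+ tj *: (c set0).1 u = 0.
    have [t ht] := hco [set j] (cards1 j).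
    exists (t + (c set0).2)%N => u; have := ht u.
    rewrite /= /xprod !big_set1 setDv pos_set1 expr0 subnn expr0 !mul1r scaler0.
    by rewrite addn0 scalerA -exprD.
  exact: xpow_in_Gamma ht.
- exists (fun _ => frac_zero M I); first by move=> J a u v; rewrite scaler0 addr0.
  move=> J /eqP; rewrite cards_eq0 => /eqP ->; exists 0%N => u.
  by rewrite /= /xprod big_set0 !expr1n !scale1r big_set0 add0r.
Qed.

End CechDegreeZero.

Section CechPositiveDegree.
Variables (R : comPzRingType) (M I : lmodType R) (r : nat) (x : 'I_r -> R).
Variables (i : nat) (c : {set 'I_r} -> (M -> I) * nat).
Hypothesis hc : cochain c.

(* [c L = f / x_L^k] rewritten as [x_L^(n-k) f / x_L^n]; only meaningful for
   [k <= n], since the subtraction truncates. *)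
Definition cech_clear (n : nat) (L : {set 'I_r}) (u : M) : I :=
  xprod x L ^+ (n - (c L).2) *: (c L).1 u.

Lemma cech_clear_linear n L : linear (cech_clear n L).
Proof. by move=> a u v; rewrite /cech_clear hc scalerDr !scalerA mulrC. Qed.

Definition cleared_cocycle (n : nat) : Prop :=
  forall L : {set 'I_r}, #|L| = i.+1 -> forall u,
    \sum_(j in L) ((-1) ^+ pos j L * x j ^+ n) *: cech_clear n (L :\ j) u = 0.

Lemma cech_cocycle_cleared : cech_cocycle x i c ->
  exists n0, (forall L, (c L).2 <= n0)%N /\
             forall n, (n0 <= n)%N -> cleared_cocycle n.
Proof.
move=> hco.
have /fin_all_exists[t ht] (L : {set 'I_r}) : exists tL : nat, #|L| = i.+1 ->
    forall u, xprod x L ^+ tL *: (cech_d x c L).1 u = 0.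
  have [hL|hL] := eqVneq #|L| i.+1; last first.
    by exists 0%N => eL; rewrite eL eqxx in hL.
  have [t' ht'] := hco L hL; exists t' => _ u.
  by have := ht' u; rewrite addn0 scaler0.
pose kmax := (\max_L (c L).2)%N; pose tmax := (\max_L t L)%N.
exists (kmax + tmax)%N; split=> [L|n hn L hL u].
  exact: leq_trans (leq_bigmax L) (leq_addr _ _).
have := ht L hL u; rewrite /cech_d /=.
set K := (\max_(j in L) (c (L :\ j)).2)%N => hs.
have Kle : (K <= kmax)%N by apply/bigmax_leqP => j _; exact: leq_bigmax.
have tle : (t L <= tmax)%N by exact: leq_bigmax.
pose e := (n - K - t L)%N.
rewrite -[RHS](scaler0 _ (xprod x L ^+ e)) -[in RHS]hs !scaler_sumr.
apply: eq_bigr => j jL.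
have cK : ((c (L :\ j)).2 <= K)%N by rewrite /K (bigD1 j jL) /= leq_maxl.
have En : n = (e + t L + K)%N by rewrite /e; lia.
have Ec : (n - (c (L :\ j)).2 = e + t L + (K - (c (L :\ j)).2))%N by rewrite /e; lia.
rewrite /cech_clear !scalerA Ec En !exprD (xprod_setD1 x jL) !exprMn.
congr (_ *: _); ring.
Qed.

(* The cochain cleared to level [m], as a linear form on the degree-i part of
   the Koszul complex of [x^(m)]. *)
Definition cech_functional (m : nat) (z : {ffun {set 'I_r} -> M}) : I :=
  \sum_(J : {set 'I_r} | #|J| == i) cech_clear m J (z J).

Lemma cech_functional_linear m : linear (cech_functional m).
Proof.
move=> a z1 z2; rewrite /cech_functional scaler_sumr -big_split /=.
by apply: eq_bigr => J _; rewrite !ffunE; exact: cech_clear_linear.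
Qed.

Lemma cech_functional_elem m (J : {set 'I_r}) (u : M) :
  #|J| = i -> cech_functional m (kos_elem J u) = cech_clear m J u.
Proof.
move=> hJ; rewrite /cech_functional (bigD1 J) /=; last by rewrite hJ.
rewrite ffunE eqxx big1 ?addr0 // => L /andP[_ /negbTE neLJ].
by rewrite ffunE neLJ; apply: linear_fun0; exact: cech_clear_linear.
Qed.

Lemma cech_functional_kernel n m :
  (forall L, (c L).2 <= n)%N -> (n <= m)%N -> cleared_cocycle n ->
  (forall z : {set 'I_r} -> M, kos_cycle (xpow x m) i z ->
     kos_boundary (xpow x n) i (kos_trans x m n z)) ->
  forall z, kos_dffun (xpow x m) i z = 0 -> cech_functional m z = 0.
Proof.
move=> hcn hnm hcl htr z hz.
have [b hb] : kos_boundary (xpow x n) i (kos_trans x m n (kos_part i z)).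
  apply: htr => J hJ.
  by have := congr1 (fun F : {ffun {set 'I_r} -> M} => F J) hz; rewrite !ffunE.
rewrite /cech_functional (eq_bigr (fun J => cech_clear n J (kos_d (xpow x n) b J))).
  rewrite sum_kos_d; last exact: cech_clear_linear.
  by rewrite big1 // => L /eqP hL; exact: hcl.
move=> J /eqP hJ; rewrite hb // /kos_trans /kos_part hJ eqxx /cech_clear.
rewrite linear_funZ // scalerA prodrXl -/(xprod x J) -exprD.
by congr (_ ^+ _ *: _); have := hcn J; lia.
Qed.

Lemma cech_coboundary_of_factor m (h : {ffun {set 'I_r} -> M} -> I) :
  (0 < i)%N -> (forall L, (c L).2 <= m)%N -> linear h ->
  (forall z, h (kos_dffun (xpow x m) i z) = cech_functional m z) ->
  cech_coboundary x i c.
Proof.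
move=> i0 hcm lh hh.
exists (fun L => (fun u => h (kos_elem L u), m)).
  by move=> L a u v /=; rewrite kos_elem_linear lh.
move=> J hJ; exists 0%N => u /=.
have [j0 j0J] : exists j0, j0 \in J by apply/card_gt0P; rewrite hJ.
have -> : (\max_(j in J) m)%N = m.
  by rewrite (bigD1 j0) //=; apply/maxn_idPl/bigmax_leqP.
have := hh (kos_elem J u); rewrite -hJ kos_dffun_elem linear_fun_sum //.
rewrite cech_functional_elem // /cech_clear => hd.
rewrite subnn expr0 scale1r scaler0 addr0 add0n addn0.
under eq_bigr => j _ do rewrite mul1r -linear_funZ //.
rewrite /xpow in hd.
by rewrite add0n hd scalerA -exprD subnKC ?hcm.
Qed.

End CechPositiveDegree.

Lemma cech_cocycle_coboundary (R : comPzRingType) (M I : lmodType R) (r : nat)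
    (x : 'I_r -> R) (i : nat) (c : {set 'I_r} -> (M -> I) * nat) :
  weakly_pro_regular M x -> injective_module I -> (0 < i)%N ->
  cochain c -> cech_cocycle x i c -> cech_coboundary x i c.
Proof.
move=> hx hI i0 hc /cech_cocycle_cleared[n [hcn hcl]].
have [m hnm htr] := hx i i0 n.+1 (ltn0Sn _).
have hcn' L : ((c L).2 <= n.+1)%N by apply: leq_trans (hcn L) (leqnSn _).
have hcm L : ((c L).2 <= m)%N by apply: leq_trans (hcn' L) hnm.
have hker := cech_functional_kernel hc hcn' hnm (hcl _ (leqnSn _)) htr.
have [h [lh hh]] := injective_module_factor hI (kos_dffun_linear _ _)
  (cech_functional_linear x i hc m) hker.
by apply: (cech_coboundary_of_factor hc i0 hcm lh) => z; exact: hh.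
Qed.

Theorem corollary5p4 (R : comPzRingType) (M : lmodType R) (r : nat) (x : 'I_r -> R)
  (hx : weakly_pro_regular M x) (I : lmodType R) (hI : injective_module I) :
  gamma_cech_qis M I x.
Proof.
split; [|split; [|split]].
- move=> f _; exact: gamma_to_cech_cocycle.
- move=> f g _ _ _ _; exact: gamma_to_cech_inj.
- move=> c hc; exact: cech_cocycle0_gamma.
- move=> i i0 c hc; exact: cech_cocycle_coboundary.
Qed.
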